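(* Let $G=(V,E)$ be a split graph. An edge $e\in E$ is split-safe (i.e., $G-e$ is a split graph) if and only if $e$ is neither the middle edge of an induced $P_4$ nor the middle edge of an induced diamond in $G$.
   Context: A split graph is a graph whose vertex set can be partitioned into a clique and an independent set. In a path $P_4$ the middle edge is the edge joining its two degree-2 vertices. A diamond is $K_4$ minus one edge; its middle edge is the edge joining its two degree-3 vertices. *)

(* A simple graph on a finite vertex type T is a symmetric,
   irreflexive boolean relation g : rel T. *)
From mathcomp Require Import all_boot.
Set Implicit Arguments. Unset Strict Implicit. Unset Printing Implicit Defensive.

Section Graphs.
Variable T : finType.

Definition is_clique (g : rel T) (K : {set T}) : Prop :=
  {in K &, forall x y, x != y -> g x y}.

Definition is_independent (g : rel T) (I : {set T}) : Prop :=
  {in I &, forall x y, ~~ g x y}.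

Definition split_graph (g : rel T) : Prop :=
  exists K : {set T}, is_clique g K /\ is_independent g (~: K).

Definition remove_edge (g : rel T) (u v : T) : rel T :=
  fun x y => g x y && ([set x; y] != [set u; v]).

Definition induced_P4 (g : rel T) (a b c d : T) : Prop :=
  uniq [:: a; b; c; d] /\ g a b /\ g b c /\ g c d /\
  ~~ g a c /\ ~~ g b d /\ ~~ g a d.

(* {a,b,c,d} induces a diamond whose only non-edge is {a,d};
   its degree-3 vertices are b and c, so its middle edge is {b,c} *)
Definition induced_diamond (g : rel T) (a b c d : T) : Prop :=
  uniq [:: a; b; c; d] /\ g a b /\ g a c /\ g b c /\ g b d /\ g c d /\
  ~~ g a d.

Definition middle_of_induced_P4 (g : rel T) (u v : T) : Prop :=
  exists a b c d, induced_P4 g a b c d /\ [set b; c] = [set u; v].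

Definition middle_of_induced_diamond (g : rel T) (u v : T) : Prop :=
  exists a b c d, induced_diamond g a b c d /\ [set b; c] = [set u; v].

End Graphs.

From mathcomp Require Import all_boot.
Set Implicit Arguments. Unset Strict Implicit. Unset Printing Implicit Defensive.

(* Deleting the middle edge of an induced P4 leaves an induced 2K2, and deleting
   the middle edge of an induced diamond leaves an induced C4; neither is split.
   Conversely, let (K, I) split G with u, v in K (otherwise (K, I) still splits
   G - uv).  An endpoint w of uv can be moved to I while its neighbours in I move
   to K, provided these neighbours form a clique complete to K - w; then uv no
   longer lies in the clique.  If both u and v have neighbours in I but neither
   qualifies, a P4 or a diamond with middle edge uv appears: a P4 a-u-v-d unless
   u, v have a common neighbour c in I, a diamond unless c is unique and complete
   to K, and then a P4 x-u-v-y from private neighbours x of u and y of v. *)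

Section SplitGraphs.
Variable T : finType.
Implicit Types (g h : rel T) (K : {set T}) (a b c d u v w x y : T).

Definition split_partition h K := is_clique h K /\ is_independent h (~: K).

Definition induced_2K2 h a b c d :=
  uniq [:: a; b; c; d] /\ h a b /\ h c d /\
  ~~ h a c /\ ~~ h a d /\ ~~ h b c /\ ~~ h b d.

Definition induced_C4 h a b c d :=
  uniq [:: a; b; c; d] /\ h a b /\ h b c /\ h c d /\ h d a /\
  ~~ h a c /\ ~~ h b d.

Lemma uniq4 a b c d :
  uniq [:: a; b; c; d] = [&& a != b, a != c, a != d, b != c, b != d & c != d].
Proof. by rewrite /= !inE !negb_or !andbT !andbA. Qed.

Lemma split_partition_edge h K x y :
  split_partition h K -> h x y -> (x \in K) || (y \in K).
Proof.
case=> _ indK hxy; apply/negPn/negP; rewrite negb_or => /andP[xK yK].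
by have := indK x y; rewrite !inE xK yK hxy => /(_ isT isT).
Qed.

Lemma split_partition_nonedge h K x y :
  split_partition h K -> x != y -> ~~ h x y -> ~~ ((x \in K) && (y \in K)).
Proof. by case=> cliK _ xy nhxy; apply/andP => -[xK yK]; rewrite cliK in nhxy. Qed.

Lemma induced_2K2_not_split h a b c d :
  induced_2K2 h a b c d -> ~ split_graph h.
Proof.
case=> + [hab [hcd [hac [had [hbc hbd]]]]] [K partK].
rewrite uniq4 => /and5P[_ ac ad bc /andP[bd _]].
have nonedge := split_partition_nonedge partK.
have := nonedge _ _ ac hac; have := nonedge _ _ ad had.
have := nonedge _ _ bc hbc; have := nonedge _ _ bd hbd.
by case/orP: (split_partition_edge partK hab) => ->;
  case/orP: (split_partition_edge partK hcd) => ->; rewrite ?andbT.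
Qed.

Lemma induced_C4_not_split h a b c d :
  induced_C4 h a b c d -> ~ split_graph h.
Proof.
case=> + [hab [hbc [hcd [hda [hac hbd]]]]] [K partK].
rewrite uniq4 => /and5P[_ ac _ _ /andP[bd _]].
have := split_partition_nonedge partK ac hac.
have := split_partition_nonedge partK bd hbd.
have := split_partition_edge partK hab; have := split_partition_edge partK hbc.
have := split_partition_edge partK hcd; have := split_partition_edge partK hda.
by case: (a \in K); case: (b \in K); case: (c \in K); case: (d \in K).
Qed.

Lemma remove_edge_notinl g u v x y :
  x \notin [set u; v] -> remove_edge g u v x y = g x y.
Proof.
move=> xuv; rewrite /remove_edge; case: eqP => [E|_]; last by rewrite andbT.
by move: xuv; rewrite -E !inE eqxx.
Qed.

Lemma remove_edge_notinr g u v x y :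
  y \notin [set u; v] -> remove_edge g u v x y = g x y.
Proof.
move=> yuv; rewrite /remove_edge; case: eqP => [E|_]; last by rewrite andbT.
by move: yuv; rewrite -E !inE eqxx orbT.
Qed.

Lemma remove_edge_removed g u v : ~~ remove_edge g u v u v.
Proof. by rewrite /remove_edge eqxx andbF. Qed.

Lemma induced_P4_remove_middle g a b c d :
  induced_P4 g a b c d -> induced_2K2 (remove_edge g b c) a b c d.
Proof.
case=> U [gab [gbc [gcd [gac [gbd gad]]]]]; move: (U); rewrite uniq4 => /and5P[ab ac ad _ /andP[bd cd]].
have aN : a \notin [set b; c] by rewrite !inE negb_or ab ac.
have dN : d \notin [set b; c] by rewrite !inE negb_or eq_sym bd eq_sym cd.
rewrite /induced_2K2 remove_edge_removed !(remove_edge_notinl g _ aN).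
by rewrite !(remove_edge_notinr g _ dN).
Qed.

Lemma induced_diamond_remove_middle g a b c d : symmetric g ->
  induced_diamond g a b c d -> induced_C4 (remove_edge g b c) a b d c.
Proof.
move=> gsym [U [gab [gac [gbc [gbd [gcd gad]]]]]]; move: U.
rewrite uniq4 => /and5P[ab ac ad bc /andP[bd cd]].
have aN : a \notin [set b; c] by rewrite !inE negb_or ab ac.
have dN : d \notin [set b; c] by rewrite !inE negb_or eq_sym bd eq_sym cd.
rewrite /induced_C4 uniq4 ab ad ac bd bc eq_sym cd remove_edge_removed.
rewrite !(remove_edge_notinl g _ aN) !(remove_edge_notinr g _ aN).
rewrite !(remove_edge_notinl g _ dN) !(remove_edge_notinr g _ dN).
by rewrite (gsym d c) (gsym c a).
Qed.

Lemma middle_of_induced_P4_not_split g u v :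
  middle_of_induced_P4 g u v -> ~ split_graph (remove_edge g u v).
Proof.
case=> a [b [c [d [P4 E]]]]; rewrite /remove_edge -E.
exact: induced_2K2_not_split (induced_P4_remove_middle P4).
Qed.

Lemma middle_of_induced_diamond_not_split g u v : symmetric g ->
  middle_of_induced_diamond g u v -> ~ split_graph (remove_edge g u v).
Proof.
move=> gsym [a [b [c [d [D E]]]]]; rewrite /remove_edge -E.
exact: induced_C4_not_split (induced_diamond_remove_middle gsym D).
Qed.

Lemma edge_neq g x y : irreflexive g -> g x y -> x != y.
Proof. by move=> girr; apply: contraTneq => ->; rewrite girr. Qed.

Lemma separated_neq g w x y : g w x -> ~~ g w y -> x != y.
Proof. by move=> wx; apply: contraNneq => <-. Qed.

Lemma induced_P4I g a u v d : symmetric g -> irreflexive g ->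
  g u a -> g u v -> g v d -> ~~ g v a -> ~~ g u d -> ~~ g a d ->
  induced_P4 g a u v d.
Proof.
move=> gsym girr ua uv vd va ud ad.
have au : a != u by rewrite eq_sym (edge_neq girr ua).
have av : a != v by rewrite eq_sym; apply: (@separated_neq g d); rewrite gsym.
have a_d : a != d by rewrite eq_sym (separated_neq vd va).
have u_d : u != d by apply: (@separated_neq g a); rewrite // gsym.
rewrite /induced_P4 uniq4 au av a_d u_d !(edge_neq girr) //.
by rewrite (gsym a) ua (gsym a v) va.
Qed.

Lemma induced_diamondI g c u v y : symmetric g -> irreflexive g ->
  c != y -> g u c -> g v c -> g u v -> g u y -> g v y -> ~~ g c y ->
  induced_diamond g c u v y.
Proof.
move=> gsym girr cy uc vc uv uy vy ncy.
have cu : c != u by rewrite eq_sym (edge_neq girr uc).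
have cv : c != v by rewrite eq_sym (edge_neq girr vc).
rewrite /induced_diamond uniq4 cu cv cy !(edge_neq girr) //.
by rewrite (gsym c) uc (gsym c v) vc.
Qed.

Lemma remove_edge_split_partition g K u v :
  split_partition g K -> ~~ ([set u; v] \subset K) ->
  split_partition (remove_edge g u v) K.
Proof.
move=> [cliK indK] uvK; split=> x y xK yK.
- move=> xy; rewrite /remove_edge cliK //=.
  by apply: contraNneq uvK => <-; rewrite subUset !sub1set xK yK.
- by rewrite /remove_edge negb_and indK.
Qed.

Definition out_nbrs g K w : {set T} := [set x in ~: K | g w x].

Definition exchangeable g K w :=
  is_clique g (out_nbrs g K w) /\ {in out_nbrs g K w & K :\ w, forall x y, g x y}.

Lemma split_partition_exchange g K w : symmetric g -> irreflexive g ->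
  split_partition g K -> exchangeable g K w ->
  split_partition g (out_nbrs g K w :|: K :\ w).
Proof.
move=> gsym girr [cliK indK] [cliN NK]; split=> x y.
- case/setUP=> [xN | xKw] /setUP[yN | yKw] xy.
  + exact: cliN.
  + exact: NK.
  + by rewrite gsym; apply: NK.
  + by move: xKw yKw => /setD1P[_ xK] /setD1P[_ yK]; apply: cliK.
- rewrite !inE !negb_or !negb_and !negbK.
  move=> /andP[xN /orP[/eqP-> | xK]] /andP[yN /orP[/eqP-> | yK]].
  + by rewrite girr.
  + by rewrite (negbTE yK) in yN.
  + by rewrite gsym; rewrite (negbTE xK) in xN.
  + by apply: indK; rewrite inE.
Qed.

Lemma exchangeable_out_nbrs0 g K w : out_nbrs g K w = set0 -> exchangeable g K w.
Proof. by rewrite /exchangeable => ->; split=> x; rewrite inE. Qed.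

Lemma exchangeable_out_nbrs1 g K w c :
  out_nbrs g K w \subset [set c] -> {in K :\ w, forall y, g c y} ->
  exchangeable g K w.
Proof.
move=> /subsetP Nc cK; split=> [x y /Nc + /Nc | x y /Nc].
  by rewrite !inE => /eqP-> /eqP->; rewrite eqxx.
by rewrite inE => /eqP->; apply: cK.
Qed.

Section ExchangeableEndpoint.
Variables (g : rel T) (K : {set T}) (u v : T).
Hypotheses (gsym : symmetric g) (girr : irreflexive g).
Hypotheses (partK : split_partition g K) (huv : g u v) (uK : u \in K) (vK : v \in K).
Hypothesis noP4 : forall a d, ~ induced_P4 g a u v d.
Hypothesis noD : forall c y, ~ induced_diamond g c u v y.

Let indK x y : x \notin K -> y \notin K -> ~~ g x y.
Proof. by move=> xK yK; case: partK => _; apply; rewrite inE. Qed.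

Lemma common_out_nbr_complete c :
  c \notin K -> g u c -> g v c -> {in K, forall y, g c y}.
Proof.
move=> cK uc vc y yK.
have [->|yu] := eqVneq y u; first by rewrite gsym.
have [->|yv] := eqVneq y v; first by rewrite gsym.
case: partK => cliK _; apply/negPn/negP => ncy.
case: (@noD c y); apply: induced_diamondI => //.
- by apply: contraNneq cK => ->.
- by apply: cliK; rewrite // eq_sym.
- by apply: cliK; rewrite // eq_sym.
Qed.

Lemma common_out_nbr_unique c x : c \notin K -> x \notin K ->
  g u c -> g v c -> g u x -> g v x -> x = c.
Proof.
move=> cK xK uc vc ux vx; apply/eqP/negPn/negP => xc.
by case: (@noD c x); apply: induced_diamondI; rewrite // 1?eq_sym ?indK.
Qed.

Lemma exists_common_out_nbr a d :
  a \in out_nbrs g K u -> d \in out_nbrs g K v ->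
  exists2 c, c \notin K & g u c && g v c.
Proof.
rewrite !inE => /andP[aK ua] /andP[dK vd].
have [va|va] := boolP (g v a); first by exists a; rewrite ?ua.
have [ud|ud] := boolP (g u d); first by exists d; rewrite ?ud.
by case: (@noP4 a d); apply: induced_P4I => //; apply: indK.
Qed.

Lemma exchangeable_endpoint : exists2 w, w \in [set u; v] & exchangeable g K w.
Proof.
have [Nu0|/set0Pn[a Nua]] := eqVneq (out_nbrs g K u) set0.
  by exists u; [rewrite !inE eqxx | exact: exchangeable_out_nbrs0].
have [Nv0|/set0Pn[d Nvd]] := eqVneq (out_nbrs g K v) set0.
  by exists v; [rewrite !inE eqxx orbT | exact: exchangeable_out_nbrs0].
have [c cK /andP[uc vc]] := exists_common_out_nbr Nua Nvd.
have cKc := common_out_nbr_complete cK uc vc.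
have [Nuc|] := boolP (out_nbrs g K u \subset [set c]).
  exists u; first by rewrite !inE eqxx.
  by apply: exchangeable_out_nbrs1 Nuc _ => y /setD1P[_ /cKc].
have [Nvc|] := boolP (out_nbrs g K v \subset [set c]).
  exists v; first by rewrite !inE eqxx orbT.
  by apply: exchangeable_out_nbrs1 Nvc _ => y /setD1P[_ /cKc].
case/subsetPn=> y; rewrite !inE => /andP[yK vy] yc.
case/subsetPn=> x; rewrite !inE => /andP[xK ux] xc.
have vx : ~~ g v x.
  by apply: contra xc => vx; rewrite (common_out_nbr_unique cK xK uc vc ux vx).
have uy : ~~ g u y.
  by apply: contra yc => uy; rewrite (common_out_nbr_unique cK yK uc vc uy vy).
by case: (@noP4 x y); apply: induced_P4I => //; apply: indK.
Qed.

End ExchangeableEndpoint.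

Lemma remove_edge_split g K u v : symmetric g -> irreflexive g ->
  split_partition g K -> g u v ->
  (forall a d, ~ induced_P4 g a u v d) ->
  (forall c y, ~ induced_diamond g c u v y) ->
  split_graph (remove_edge g u v).
Proof.
move=> gsym girr partK huv noP4 noD.
have [uvK|uvK] := boolP ([set u; v] \subset K); last first.
  by exists K; apply: remove_edge_split_partition.
move: uvK; rewrite subUset !sub1set => /andP[uK vK].
have [w wuv exw] := exchangeable_endpoint gsym girr partK huv uK vK noP4 noD.
exists (out_nbrs g K w :|: K :\ w); apply: remove_edge_split_partition.
  exact: split_partition_exchange.
by apply/negP => /subsetP/(_ w wuv); rewrite !inE girr eqxx andbF.
Qed.

End SplitGraphs.

Theorem lemma4p2 (T : finType) (g : rel T)
  (gsym : symmetric g) (girr : irreflexive g)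
  (Gsplit : split_graph g) (u v : T) (huv : g u v) :
  split_graph (remove_edge g u v) <->
  (~ middle_of_induced_P4 g u v /\ ~ middle_of_induced_diamond g u v).
Proof.
split.
- move=> splitG; split=> [P4 | D].
  + exact: middle_of_induced_P4_not_split P4 splitG.
  + exact: middle_of_induced_diamond_not_split gsym D splitG.
- case=> noP4 noD; case: Gsplit => K partK.
  apply: (remove_edge_split gsym girr partK huv) => [a d | c y] H.
  + by apply: noP4; exists a, u, v, d.
  + by apply: noD; exists c, u, v, y.
Qed.
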